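(* If $A$ contains at least two atoms, then the axioms of $\mathrm{EqFSCL}^-$ are independent: for each equation $e\in\mathrm{EqFSCL}^-$, $e$ is not derivable in equational logic from $\mathrm{EqFSCL}^-\setminus\{e\}$ (equivalently, there is a $\Sigma_{SCL}(A)$-algebra satisfying all of $\mathrm{EqFSCL}^-\setminus\{e\}$ but not $e$).
   Context: The signature $\Sigma_{SCL}(A)$, for a set $A$ of atoms, has constants $\mathsf T,\mathsf F$, each $a\in A$ as a constant, unary $\neg$, binary $\land^\circ$ and $\lor^\circ$. $\mathrm{EqFSCL}^-$ consists of the eight equations (variables $x,y,z$): (F2) $x\lor^\circ y=\neg(\neg x\land^\circ\neg y)$; (F4) $\mathsf T\land^\circ x=x$; (F5) $x\lor^\circ\mathsf F=x$; (F6) $\mathsf F\land^\circ x=\mathsf F$; (F7) $(x\land^\circ y)\land^\circ z=x\land^\circ(y\land^\circ z)$; (F8) $\neg x\land^\circ\mathsf F=x\land^\circ\mathsf F$; (F9) $(x\land^\circ\mathsf F)\lor^\circ y=(x\lor^\circ\mathsf T)\land^\circ y$; (F10) $(x\land^\circ y)\lor^\circ(z\land^\circ\mathsf F)=(x\lor^\circ(z\land^\circ\mathsf F))\land^\circ(y\lor^\circ(z\land^\circ\mathsf F))$. *)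

Inductive term (A : Type) : Type :=
| Var : nat -> term A
| Tt : term A
| Ff : term A
| Atom : A -> term A
| Neg : term A -> term A
| AndL : term A -> term A -> term A
| OrL : term A -> term A -> term A.

Arguments Var {A} _.
Arguments Tt {A}.
Arguments Ff {A}.
Arguments Atom {A} _.
Arguments Neg {A} _.
Arguments AndL {A} _ _.
Arguments OrL {A} _ _.

Definition equation (A : Type) : Type := (term A * term A)%type.

Fixpoint subst {A : Type} (s : nat -> term A) (t : term A) : term A :=
  match t with
  | Var n => s n
  | Tt => Tt
  | Ff => Ff
  | Atom a => Atom a
  | Neg u => Neg (subst s u)
  | AndL u v => AndL (subst s u) (subst s v)
  | OrL u v => OrL (subst s u) (subst s v)
  end.

Inductive derivable {A : Type} (E : equation A -> Prop) : term A -> term A -> Prop :=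
| d_ax : forall l r (s : nat -> term A), E (l, r) -> derivable E (subst s l) (subst s r)
| d_refl : forall t, derivable E t t
| d_sym : forall t u, derivable E t u -> derivable E u t
| d_trans : forall t u v, derivable E t u -> derivable E u v -> derivable E t v
| d_neg : forall t u, derivable E t u -> derivable E (Neg t) (Neg u)
| d_and : forall t t' u u', derivable E t t' -> derivable E u u' ->
    derivable E (AndL t u) (AndL t' u')
| d_or : forall t t' u u', derivable E t t' -> derivable E u u' ->
    derivable E (OrL t u) (OrL t' u').

Inductive axname : Type := F2 | F4 | F5 | F6 | F7 | F8 | F9 | F10.

Section EqDefs.
Context {A : Type}.
Let x : term A := Var 0.
Let y : term A := Var 1.
Let z : term A := Var 2.

Definition ax (n : axname) : equation A :=
  match n with
  | F2 => (OrL x y, Neg (AndL (Neg x) (Neg y)))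
  | F4 => (AndL Tt x, x)
  | F5 => (OrL x Ff, x)
  | F6 => (AndL Ff x, Ff)
  | F7 => (AndL (AndL x y) z, AndL x (AndL y z))
  | F8 => (AndL (Neg x) Ff, AndL x Ff)
  | F9 => (OrL (AndL x Ff) y, AndL (OrL x Tt) y)
  | F10 => (OrL (AndL x y) (AndL z Ff),
            AndL (OrL x (AndL z Ff)) (OrL y (AndL z Ff)))
  end.
End EqDefs.

Definition EqFSCL_without {A : Type} (e : axname) : equation A -> Prop :=
  fun q => exists e', e' <> e /\ q = ax e'.


(* Equational logic is sound for algebras, so an axiom is independent of the
   others as soon as some Sigma_SCL(A)-algebra satisfies the other seven
   equations and refutes it.  For each axiom a model with at most five
   elements does the job.  All models interpret every atom as T. *)

Section Semantics.
Variable A : Type.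

Record algebra := {
  carrier :> Type;
  alg_T : carrier;
  alg_F : carrier;
  alg_neg : carrier -> carrier;
  alg_and : carrier -> carrier -> carrier;
  alg_or : carrier -> carrier -> carrier;
  alg_atom : A -> carrier }.

Fixpoint eval (M : algebra) (v : nat -> M) (t : term A) : M :=
  match t with
  | Var n => v n
  | Tt => alg_T M
  | Ff => alg_F M
  | Atom a => alg_atom M a
  | Neg u => alg_neg M (eval M v u)
  | AndL u w => alg_and M (eval M v u) (eval M v w)
  | OrL u w => alg_or M (eval M v u) (eval M v w)
  end.

Definition satisfies (M : algebra) (q : equation A) : Prop :=
  forall v, eval M v (fst q) = eval M v (snd q).

Lemma eval_subst (M : algebra) (v : nat -> M) (s : nat -> term A) (t : term A) :
  eval M v (subst s t) = eval M (fun n => eval M v (s n)) t.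
Proof. induction t; simpl; congruence. Qed.

Lemma derivable_sound (M : algebra) (E : equation A -> Prop) :
  (forall q, E q -> satisfies M q) ->
  forall t u, derivable E t u -> forall v, eval M v t = eval M v u.
Proof.
  intros HE t u H; induction H; intro w; simpl; try congruence.
  rewrite !eval_subst; exact (HE _ H _).
Qed.

Lemma not_derivable_without (M : algebra) (e : axname) :
  (forall e', e' <> e -> satisfies M (@ax A e')) -> ~ satisfies M (@ax A e) ->
  ~ derivable (@EqFSCL_without A e) (fst (ax e)) (snd (ax e)).
Proof.
  intros Hothers Hfail Hder; apply Hfail; intro v.
  apply derivable_sound with (2 := Hder).
  intros q [e' [Hne ->]]; exact (Hothers e' Hne).
Qed.

Inductive four := tt4 | ff4 | p4 | q4.
Inductive five := tt5 | ff5 | u5 | w5 | nu5.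

Definition dual_or {C : Type} (neg : C -> C) (and : C -> C -> C) (x y : C) : C :=
  neg (and (neg x) (neg y)).

Definition neg4_swap (x : four) : four :=
  match x with tt4 => ff4 | ff4 => tt4 | p4 => q4 | q4 => p4 end.

Definition neg4_fix (x : four) : four :=
  match x with tt4 => ff4 | ff4 => tt4 | _ => x end.

Definition neg5 (x : five) : five :=
  match x with tt5 => ff5 | ff5 => tt5 | u5 => nu5 | nu5 => u5 | w5 => w5 end.

Definition and_F7 (x y : four) : four :=
  match x, y with
  | tt4, _ => y
  | ff4, _ => ff4
  | _, tt4 => x
  | _, ff4 => ff4
  | _, _ => tt4
  end.

Definition and_F8 (x y : four) : four := match x with tt4 => y | _ => x end.

Definition and_F9 (x y : five) : five :=
  match x, y with
  | tt5, _ => y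
  | ff5, _ => ff5
  | u5, _ => u5
  | _, (tt5 | nu5) => x
  | _, _ => u5
  end.

Definition and_F10 (x y : four) : four :=
  match x, y with
  | tt4, _ => y
  | q4, tt4 => q4
  | q4, q4 => tt4
  | q4, _ => y
  | _, _ => x
  end.

Definition countermodel (e : axname) : algebra :=
  match e with
  | F2 => {| alg_T := true; alg_F := false; alg_neg := fun _ => true;
             alg_and := andb; alg_or := orb; alg_atom := fun _ => true |}
  | F4 => {| alg_T := false; alg_F := false; alg_neg := fun x => x;
             alg_and := fun x _ => x; alg_or := fun x _ => x;
             alg_atom := fun _ => false |}
  | F5 => {| alg_T := true; alg_F := false; alg_neg := fun _ => false;
             alg_and := andb; alg_or := fun _ _ => false;
             alg_atom := fun _ => true |}
  | F6 => {| alg_T := false; alg_F := false; alg_neg := fun x => x;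
             alg_and := orb; alg_or := orb; alg_atom := fun _ => false |}
  | F7 => {| alg_T := tt4; alg_F := ff4; alg_neg := neg4_swap;
             alg_and := and_F7; alg_or := dual_or neg4_swap and_F7;
             alg_atom := fun _ => tt4 |}
  | F8 => {| alg_T := tt4; alg_F := ff4; alg_neg := neg4_swap;
             alg_and := and_F8; alg_or := dual_or neg4_swap and_F8;
             alg_atom := fun _ => tt4 |}
  | F9 => {| alg_T := tt5; alg_F := ff5; alg_neg := neg5;
             alg_and := and_F9; alg_or := dual_or neg5 and_F9;
             alg_atom := fun _ => tt5 |}
  | F10 => {| alg_T := tt4; alg_F := ff4; alg_neg := neg4_fix;
              alg_and := and_F10; alg_or := dual_or neg4_fix and_F10;
              alg_atom := fun _ => tt4 |}
  end.

Lemma countermodel_satisfies_others (e e' : axname) :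
  e' <> e -> satisfies (countermodel e) (ax e').
Proof.
  intros Hne v; destruct e, e'; try congruence; cbn;
    destruct (v 0), (v 1), (v 2); reflexivity.
Qed.

Definition valuation3 {C : Type} (x y z : C) (n : nat) : C :=
  match n with 0 => x | 1 => y | _ => z end.

Lemma countermodel_refutes (e : axname) : ~ satisfies (countermodel e) (ax e).
Proof.
  intro Hsat; destruct e.
  - discriminate (Hsat (valuation3 false false false)).
  - discriminate (Hsat (valuation3 true true true)).
  - discriminate (Hsat (valuation3 true true true)).
  - discriminate (Hsat (valuation3 true true true)).
  - discriminate (Hsat (valuation3 p4 p4 q4)).
  - discriminate (Hsat (valuation3 p4 tt4 tt4)).
  - discriminate (Hsat (valuation3 u5 w5 tt5)).
  - discriminate (Hsat (valuation3 q4 q4 p4)).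
Qed.

End Semantics.

Theorem theorem2p8 (A : Type) (a b : A) (hab : a <> b) :
  forall e : axname,
    ~ derivable (@EqFSCL_without A e) (fst (@ax A e)) (snd (@ax A e)).
Proof.
  intro e.
  apply (not_derivable_without A (countermodel A e)).
  - apply countermodel_satisfies_others.
  - apply countermodel_refutes.
Qed.
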